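(* Let $X$ be a complex Banach space, $\mathcal{F}$ a commutative algebra with unit, $\Phi:\mathcal{F}\to\mathcal{C}(X)$ a calculus, and $f\in\mathcal{F}$. If $\mathcal{E}\subseteq\mathrm{reg}(f,\Phi)$ is a $\Phi$-anchor set, then $\mathcal{E}$ determines $\Phi$ at $f$, i.e., for all $x,y\in X$: $\Phi(f)x=y$ if and only if $\Phi(ef)x=\Phi(e)y$ for all $e\in\mathcal{E}$.
   Context: $\mathcal{L}(X)$, $\mathcal{C}(X)$: bounded, resp. closed linear operators on $X$; operator inclusions are graph inclusions, sums/products have natural domains, and ''$Tx=y$'' means $x\in\mathrm{dom}(T)$ and $Tx=y$. A proto-calculus is a map $\Phi:\mathcal{F}\to\mathcal{C}(X)$ ($\mathcal{F}$ a unital algebra) with (FC1) $\Phi(\mathbf{1})=I$; (FC2) $\lambda\Phi(f)\subseteq\Phi(\lambda f)$, $\Phi(f)+\Phi(g)\subseteq\Phi(f+g)$; (FC3) $\Phi(f)\Phi(g)\subseteq\Phi(fg)$ with $\mathrm{dom}(\Phi(f)\Phi(g))=\mathrm{dom}(\Phi(g))\cap\mathrm{dom}(\Phi(fg))$. Let $\mathrm{bdd}(\mathcal{F},\Phi)=\{f:\Phi(f)\in\mathcal{L}(X)\}$ and for $f\in\mathcal{F}$, $\mathrm{reg}(f,\Phi)=\{e\in\mathcal{F}: e,\ ef\in\mathrm{bdd}(\mathcal{F},\Phi)\}$. A subset $\mathcal{M}\subseteq\mathrm{bdd}(\mathcal{F},\Phi)$ determines $\Phi$ at $f$ if for all $x,y\in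 X$: $\Phi(f)x=y\iff\Phi(ef)x=\Phi(e)y$ for all $e\in\mathcal{M}\cap\mathrm{reg}(f,\Phi)$. A proto-calculus is a calculus if (FC4) $\mathrm{bdd}(\mathcal{F},\Phi)$ determines $\Phi$ at every $f\in\mathcal{F}$. A nonempty subset $\mathcal{M}\subseteq\mathrm{bdd}(\mathcal{F},\Phi)$ is a $\Phi$-anchor set if $\bigcap_{e\in\mathcal{M}}\ker\Phi(e)=\{0\}$. *)

From HB Require Import structures.
From mathcomp Require Import all_boot all_order all_algebra.
From mathcomp Require Import complex.
From mathcomp Require Import all_classical all_reals all_analysis.
Set Implicit Arguments. Unset Strict Implicit. Unset Printing Implicit Defensive.
Import Order.TTheory GRing.Theory Num.Theory.
Import numFieldNormedType.Exports.
Local Open Scope classical_set_scope.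
Local Open Scope ring_scope.

(* Linear operators on X are represented by their graphs, subsets of X * X.
   "T x = y" means (x, y) \in T (which forces x \in dom T).  Operator
   inclusion is graph inclusion. *)
Section Ops.
Variables (K : numDomainType) (X : normedModType K).

Definition op := set (X * X).

Definition op_dom (T : op) : set X := [set x | exists y, T (x, y)].

Definition closed_op (T : op) : Prop :=
  [/\ T (0, 0),
      (forall x1 y1 x2 y2, T (x1, y1) -> T (x2, y2) -> T (x1 + x2, y1 + y2)),
      (forall (a : K) x y, T (x, y) -> T (a *: x, a *: y)),
      (forall x y1 y2, T (x, y1) -> T (x, y2) -> y1 = y2)
    & closed T].

Definition bounded_op (T : op) : Prop :=
  closed_op T /\ op_dom T = setT /\
  exists C : K, forall x y, T (x, y) -> `|y| <= C * `|x|.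

Definition op_id : op := [set p | p.2 = p.1].
Definition op_scale (a : K) (T : op) : op :=
  [set p | exists y, T (p.1, y) /\ p.2 = a *: y].
Definition op_add (S T : op) : op :=
  [set p | exists y1 y2, S (p.1, y1) /\ T (p.1, y2) /\ p.2 = y1 + y2].
Definition op_mul (S T : op) : op :=
  [set p | exists z, T (p.1, z) /\ S (z, p.2)].
End Ops.

Section Calculus.
Variables (K : numDomainType) (X : normedModType K) (F : comAlgType K).
Variable Phi : F -> op X.

Definition is_proto_calculus : Prop :=
  (forall f, closed_op (Phi f)) /\
  [/\ Phi 1 = @op_id _ X,
      (forall (a : K) f, op_scale a (Phi f) `<=` Phi (a *: f)),
      (forall f g, op_add (Phi f) (Phi g) `<=` Phi (f + g)),
      (forall f g, op_mul (Phi f) (Phi g) `<=` Phi (f * g))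
    & (forall f g, op_dom (op_mul (Phi f) (Phi g))
                   = op_dom (Phi g) `&` op_dom (Phi (f * g)))].

Definition bdd : set F := [set f | bounded_op (Phi f)].

Definition reg (f : F) : set F := [set e | bdd e /\ bdd (e * f)].

Definition determines (M : set F) (f : F) : Prop :=
  M `<=` bdd /\
  forall x y : X, Phi f (x, y) <->
    (forall e, M e -> reg f e ->
       exists z, Phi (e * f) (x, z) /\ Phi e (y, z)).

Definition is_calculus : Prop :=
  is_proto_calculus /\ forall f, determines bdd f.

Definition anchor_set (M : set F) : Prop :=
  M !=set0 /\ M `<=` bdd /\
  forall x : X, (forall e, M e -> Phi e (x, 0)) -> x = 0.
End Calculus.

From HB Require Import structures.
From mathcomp Require Import all_boot all_order all_algebra.
From mathcomp Require Import complex.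
From mathcomp Require Import all_classical all_reals all_analysis.
Set Implicit Arguments. Unset Strict Implicit. Unset Printing Implicit Defensive.
Import Order.TTheory GRing.Theory Num.Theory.
Import numFieldNormedType.Exports.
Local Open Scope classical_set_scope.
Local Open Scope ring_scope.

(* Let g be in reg(f), and put u = Phi(gf)x, v = Phi(g)y.  For every e in the
   anchor set, commutativity of F and (FC3) give
   Phi(e)u = Phi(egf)x = Phi(g)Phi(ef)x = Phi(g)Phi(e)y = Phi(ge)y = Phi(e)v,
   so u - v lies in the common kernel of the anchor set and u = v.  Hence the
   condition on the anchor set implies the one on all of reg(f), which
   determines Phi at f by (FC4). *)

Section Operators.
Variables (K : numDomainType) (X : normedModType K).

Lemma closed_op_fun (T : op X) x y1 y2 :
  closed_op T -> T (x, y1) -> T (x, y2) -> y1 = y2.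
Proof. by case=> _ _ _ Tfun _; apply: Tfun. Qed.

Lemma closed_op_sub (T : op X) x1 y1 x2 y2 :
  closed_op T -> T (x1, y1) -> T (x2, y2) -> T (x1 - x2, y1 - y2).
Proof.
case=> _ Tadd Tscale _ _ T1 T2.
by apply: Tadd T1 _; rewrite -!scaleN1r; apply: Tscale.
Qed.

Lemma bounded_op_total x (T : op X) : bounded_op T -> exists y, T (x, y).
Proof. by case=> _ [domT _]; have : op_dom T x by rewrite domT. Qed.

End Operators.

Section Anchor.
Variables (K : numDomainType) (X : normedModType K) (F : comAlgType K).
Variables (Phi : F -> op X) (E : set F).
Hypothesis anchorE : anchor_set Phi E.

Lemma anchor_set_eq u v :
  (forall e, E e -> exists a, Phi e (u, a) /\ Phi e (v, a)) -> u = v.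
Proof.
case: anchorE => _ [EB kerE] agree; apply/eqP; rewrite -subr_eq0; apply/eqP.
apply: kerE => e Ee; have [a [eu ev]] := agree e Ee.
by rewrite -(subrr a); apply: closed_op_sub => //; case: (EB e Ee).
Qed.

End Anchor.

Section ProtoCalculus.
Variables (K : numDomainType) (X : normedModType K) (F : comAlgType K).
Variable Phi : F -> op X.
Hypothesis PhiP : is_proto_calculus Phi.

Lemma Phi_fun h x y1 y2 : Phi h (x, y1) -> Phi h (x, y2) -> y1 = y2.
Proof. by case: PhiP => closedPhi _; apply: closed_op_fun. Qed.

Lemma Phi_comp h k x z w : Phi k (x, z) -> Phi h (z, w) -> Phi (h * k) (x, w).
Proof. by case: PhiP => _ [_ _ _ mulPhi _] kx hz; apply: mulPhi; exists z. Qed.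

Lemma Phi_bounded_comp e f x y :
  bdd Phi e -> Phi f (x, y) -> exists z, Phi (e * f) (x, z) /\ Phi e (y, z).
Proof.
move=> /(bounded_op_total y) [z ey] fx.
by exists z; split=> //; apply: Phi_comp ey.
Qed.

Lemma Phi_intertwine e f g x y z u v :
  bdd Phi e -> bdd Phi g ->
  Phi (e * f) (x, z) -> Phi e (y, z) -> Phi (g * f) (x, u) -> Phi g (y, v) ->
  exists a, Phi e (u, a) /\ Phi e (v, a).
Proof.
move=> /[dup] eB /(bounded_op_total u) [a eu] /(bounded_op_total z) [b gz].
move=> efx ey gfx gy; exists a; split=> //.
have egf_a : a = b.
  apply: (Phi_fun (Phi_comp gfx eu)).
  by rewrite mulrCA; apply: Phi_comp gz.
have [c ev] := bounded_op_total v eB.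
suff -> : a = c by [].
rewrite egf_a; apply: (Phi_fun (Phi_comp ey gz)).
by rewrite mulrC; apply: Phi_comp ev.
Qed.

End ProtoCalculus.

Theorem theorem4p1 (R : realType) (X : completeNormedModType (R[i]))
  (F : comAlgType (R[i])) (Phi : F -> op X) (f : F) (E : set F) :
  is_calculus Phi -> E `<=` reg Phi f -> anchor_set Phi E ->
  determines Phi E f.
Proof.
move=> [PhiP determinesPhi] Ereg anchorE.
split=> [e /Ereg [] //|x y]; split.
  by move=> fx e _ [eB _]; apply: Phi_bounded_comp.
move=> Ecomp; have [_ ->] := determinesPhi f; move=> g _ [gB gfB].
have [u gfx] := bounded_op_total x gfB.
have [v gy] := bounded_op_total y gB.
suff uv : u = v by exists u; split=> //; rewrite uv.
apply: (anchor_set_eq anchorE) => e Ee.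
have [z [efx ey]] := Ecomp e Ee (Ereg e Ee).
case: (Ereg e Ee) => eB _.
exact: (Phi_intertwine PhiP eB gB efx ey gfx gy).
Qed.
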